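(* Let $k$ be an algebraically closed field of characteristic $0$, $R=k[x,y]$, and let $L=(x^d,x^{d-1}y^{a_1},\dots,y^{a_d})$ with $0=a_0<a_1<\dots<a_d$ be a lex-segment ideal whose differences $b_i=a_i-a_{i-1}$ satisfy $b_i\le b_{i+1}$ for $i=1,\dots,d-1$. Let $\psi:R[T_0,\dots,T_d]\to\mathcal R(L)=R[Lt]$ be the $R$-algebra map with $\psi(T_i)=x^{d-i}y^{a_i}t$, and $H=\ker\psi$. Then the elements $$xT_i-y^{b_i}T_{i-1}\ (i=1,\dots,d),\qquad T_iT_{j-1}-y^{b_i-b_j}T_{i-1}T_j\ (d\ge i>j\ge1)$$ form a Gröbner basis of $H$ with respect to any term order on $k[x,y,T_0,\dots,T_d]$ for which the initial term of each listed element is the term written on the left. Moreover, $\mathcal R(L)$ is normal.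
   Context: $\mathcal R(L)=\bigoplus_{n\ge0}L^n$ is the Rees algebra, identified with $R[Lt]\subseteq R[t]$. *)

From HB Require Import structures.
From mathcomp Require Import all_boot all_order all_algebra.
From mathcomp Require Import fraction.
From mathcomp Require Import mpoly.
Unset Printing Implicit Defensive.
Import Order.TTheory GRing.Theory Num.Theory.
Local Open Scope ring_scope.

Definition term_order {n : nat} (le : rel 'X_{1..n}) : Prop :=
  [/\ (forall m1 m2, le m1 m2 || le m2 m1),
      antisymmetric le,
      transitive le,
      (forall m, le 0%MM m) &
      (forall m1 m2 m, le m1 m2 -> le (m1 + m)%MM (m2 + m)%MM)].

Definition ltT {n : nat} (le : rel 'X_{1..n}) (m1 m2 : 'X_{1..n}) : bool :=
  le m1 m2 && (m1 != m2).

Definition is_lead {R : nzRingType} {n : nat} (le : rel 'X_{1..n})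
  (p : {mpoly R[n]}) (m : 'X_{1..n}) : Prop :=
  m \in msupp p /\ forall m', m' \in msupp p -> le m' m.

Definition groebner_basis {R : nzRingType} {n : nat} (le : rel 'X_{1..n})
  (I G : {mpoly R[n]} -> Prop) : Prop :=
  (forall g, G g -> I g) /\
  (forall f, I f -> f != 0 ->
     exists g, G g /\ exists mf mg,
        [/\ is_lead le f mf, is_lead le g mg & lem mg mf]).

(* ---- Normality of a subring S of a domain A: S is integrally closed in
   its field of fractions (realised inside Frac(A)). ---- *)
Definition normal_subring {A : idomainType} (S : A -> Prop) : Prop :=
  forall z : {fraction A},
    (exists u v, [/\ S u, S v, v != 0 & z = (FracField.tofrac u) / (FracField.tofrac v)]) ->
    (exists p : {poly {fraction A}},
        [/\ p \is monic, (forall i, exists s, S s /\ p`_i = (FracField.tofrac s)) & root p z]) ->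
    exists s, S s /\ z = (FracField.tofrac s).

Section Setting.
Context {k : fieldType}.

Definition mvar (n i : nat) : {mpoly k[n.+1]} := 'X_(inord i).
Definition mmon (n i : nat) : 'X_{1..n.+1} := U_(inord i)%MM.

(* Source ring R[T_0..T_d] = k[x, y, T_0, ..., T_d] = k[X_0, ..., X_{d+2}]
   with x = X_0, y = X_1, T_i = X_{i+2}. *)
Definition vx (d : nat) := mvar d.+2 0.
Definition vy (d : nat) := mvar d.+2 1.
Definition vT (d i : nat) := mvar d.+2 i.+2.
Definition mx (d : nat) := mmon d.+2 0.
Definition my (d : nat) := mmon d.+2 1.
Definition mT (d i : nat) := mmon d.+2 i.+2.

(* Target ring R[t] = k[x, y, t] = k[X_0, X_1, X_2]. *)
Definition tx := mvar 2 0.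
Definition ty := mvar 2 1.
Definition tt := mvar 2 2.

Definition bdiff (a : nat -> nat) (i : nat) : nat := a i - a i.-1.

Definition psi_img (d : nat) (a : nat -> nat) (i : 'I_d.+3) : {mpoly k[3]} :=
  if (i : nat) == 0 then tx
  else if (i : nat) == 1 then ty
  else tx ^+ (d - (i - 2)) * ty ^+ (a (i - 2)) * tt.

Definition psi (d : nat) (a : nat -> nat) (p : {mpoly k[d.+3]}) : {mpoly k[3]} :=
  p \mPo [tuple psi_img d a i | i < d.+3].

Definition kerpsi (d : nat) (a : nat -> nat) (p : {mpoly k[d.+3]}) : Prop :=
  psi d a p = 0.

Definition rees (d : nat) (a : nat -> nat) (s : {mpoly k[3]}) : Prop :=
  exists q, s = psi d a q.

Definition gensH (d : nat) (a : nat -> nat) (g : {mpoly k[d.+3]}) : Prop :=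
  (exists i, [/\ (1 <= i)%N, (i <= d)%N &
      g = vx d * vT d i - vy d ^+ bdiff a i * vT d i.-1]) \/
  (exists i j, [/\ (1 <= j)%N, (j < i)%N, (i <= d)%N &
      g = vT d i * vT d j.-1
          - vy d ^+ (bdiff a i - bdiff a j) * vT d i.-1 * vT d j]).

End Setting.

(* psi sends monomials to monomials, so its kernel is spanned by the binomials
   X^L - X^T with psi(X^L) = psi(X^T), and the listed generators are such
   binomials. Call a monomial reducible when an initial term x T_i or
   T_i T_(j-1) divides it. A generator rewrites a reducible monomial into a
   smaller one with the same image while the weight x -> 1, y -> 0, T_j -> j^2
   drops, so every monomial lies above an irreducible one with the same image.
   Irreducible monomials have the form x^u y^v T_c^(D-r) T_(c+1)^r, with u > 0
   only when the T-part is T_0^D, and psi is injective on them: the t- and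
   x-degrees of the image determine c and r by Euclidean division. Hence the
   leading monomial of a kernel element is reducible, since any other monomial
   with the same image would reduce to it from below.

   The image of psi is spanned by the monomials x^X y^Y t^D with
   b_i X + Y >= (b_i (d - i) + a_i) D for 1 <= i <= d: the inequalities hold on
   the image because b is nondecreasing, and dividing X by D produces a
   preimage of any such monomial. A subalgebra of k[x,y,t] spanned by the
   monomials of a cone cut out by linear forms is normal: an element of the
   fraction field integral over it is a polynomial, k[x,y,t] being integrally
   closed, and its monomials have nonnegative weight for every form because
   initial forms multiply. *)

From HB Require Import structures.
From mathcomp Require Import all_boot all_order all_algebra.
From mathcomp Require Import fraction.
From mathcomp Require Import mpoly.
From mathcomp Require Import zify.
From Stdlib Require Import Classical.
Import Order.TTheory GRing.Theory Num.Theory.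
Local Open Scope ring_scope.

Section TermOrder.
Context {n : nat} {le : rel 'X_{1..n}}.
Hypothesis hle : term_order le.

Lemma term_order_refl m : le m m.
Proof. by case: hle => tot _ _ _ _; have := tot m m; rewrite orbb. Qed.

Lemma term_order_trans : transitive le.
Proof. by case: hle. Qed.

Lemma term_order_anti m1 m2 : le m1 m2 -> le m2 m1 -> m1 = m2.
Proof. by case: hle => _ anti _ _ _ h12 h21; apply: anti; rewrite h12 h21. Qed.

Lemma term_order_addr m1 m2 m : le m1 m2 -> le (m1 + m)%MM (m2 + m)%MM.
Proof. by case: hle => _ _ _ _; apply. Qed.

Lemma term_order_max_seq (s : seq 'X_{1..n}) :
  s != [::] -> exists2 x, x \in s & forall y, y \in s -> le y x.
Proof.
elim: s => [//|x [|y s] IH] _.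
  by exists x => [|z]; rewrite ?inE // => /eqP->; apply: term_order_refl.
have [z zs zmax] := IH isT.
case: hle => tot _ _ _ _; case/orP: (tot x z) => [xz|zx].
- by exists z => [|u]; rewrite inE ?zs ?orbT // => /orP[/eqP->|/zmax].
- exists x => [|u]; rewrite inE ?eqxx // => /orP[/eqP->|/zmax uz].
    exact: term_order_refl.
  exact: term_order_trans uz zx.
Qed.

Lemma is_lead_binomial (R : nzRingType) (L T : 'X_{1..n}) :
  ltT le T L -> is_lead le ('X_[L] - 'X_[T] : {mpoly R[n]}) L.
Proof.
case/andP => TL /negbTE TneL; split=> [|m]; rewrite mcoeff_msupp mcoeffB !mcoeffX.
  by rewrite eqxx TneL subr0 oner_neq0.
case: (eqVneq L m) => [->|_ ]; first by rewrite term_order_refl.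
by case: (eqVneq T m) => [<-|_]; rewrite ?subrr ?eqxx.
Qed.

End TermOrder.

Section MonomialSubstitution.
Context {n p : nat} (g : 'I_n -> 'X_{1..p}).

Definition mnm_subst (m : 'X_{1..n}) : 'X_{1..p} := (\sum_(i < n) g i *+ m i)%MM.

Lemma mnm_substD m1 m2 : mnm_subst (m1 + m2)%MM = (mnm_subst m1 + mnm_subst m2)%MM.
Proof.
apply/mnmP => l; rewrite mnmDE !mnm_sumE -big_split /=.
by apply: eq_bigr => i _; rewrite !mulmnE mnmDE mulnDr.
Qed.

Lemma mnm_substMn m b : mnm_subst (m *+ b)%MM = (mnm_subst m *+ b)%MM.
Proof.
apply/mnmP => l; rewrite mulmnE !mnm_sumE big_distrl /=.
by apply: eq_bigr => i _; rewrite !mulmnE mulnA.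
Qed.

Lemma mnm_substU i : mnm_subst U_(i)%MM = g i.
Proof.
apply/mnmP => l; rewrite mnm_sumE (bigD1 i) //= mulmnE mnm1E eqxx muln1.
by rewrite big1 ?addn0 // => j /negbTE ji; rewrite mulmnE mnm1E eq_sym ji muln0.
Qed.

Context {R : nzRingType}.
Local Notation subst := [tuple ('X_[g i] : {mpoly R[p]}) | i < n].

Lemma comp_mpoly_mnmX m : 'X_[m] \mPo subst = 'X_[mnm_subst m].
Proof.
rewrite comp_mpolyX /mnm_subst.
rewrite (big_morph (fun m : 'X_{1..p} => 'X_[R, m]) (@mpolyXD _ _) (@mpolyX0 _ _)).
by apply: eq_bigr => i _; rewrite tnth_mktuple mpolyXn.
Qed.

Lemma comp_mpoly_mnmE f :
  f \mPo subst = \sum_(m <- msupp f) f@_m *: 'X_[mnm_subst m].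
Proof. by rewrite comp_mpolyEX; apply: eq_bigr => m _; rewrite comp_mpoly_mnmX. Qed.

(* A monomial of a kernel element must share its image with another monomial,
   otherwise its coefficient would survive in the image. *)
Lemma comp_mpoly_mnm_fiber f mf : f \mPo subst = 0 -> mf \in msupp f ->
  exists m, [/\ m \in msupp f, m != mf & mnm_subst m = mnm_subst mf].
Proof.
move=> f0 mf_f.
case: (boolP (has (fun m => (m != mf) && (mnm_subst m == mnm_subst mf)) (msupp f))).
  by case/hasP => m m_f /andP[m_mf /eqP e]; exists m.
move/hasPn => alone; move: f0 => /(congr1 (mcoeff (mnm_subst mf))).
rewrite comp_mpoly_mnmE mcoeff0 raddf_sum (bigD1_seq mf) ?msupp_uniq //=.
rewrite big1_seq ?addr0 => [|m /andP[m_mf m_f]].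
  by rewrite mcoeffZ mcoeffX eqxx mulr1 => /eqP; rewrite mcoeff_eq0 mf_f.
rewrite mcoeffZ mcoeffX; case: eqP => [e|]; last by rewrite mulr0.
by have := alone m m_f; rewrite m_mf e eqxx.
Qed.

End MonomialSubstitution.

Section WeightedDegree.
Context {n : nat} (w : 'I_n -> nat).

Definition wdeg (m : 'X_{1..n}) : nat := (\sum_(i < n) w i * m i)%N.

Lemma wdegD m1 m2 : wdeg (m1 + m2)%MM = (wdeg m1 + wdeg m2)%N.
Proof. by rewrite /wdeg -big_split; apply: eq_bigr => i _; rewrite mnmDE mulnDr. Qed.

Lemma wdegMn m b : wdeg (m *+ b)%MM = (wdeg m * b)%N.
Proof. by rewrite /wdeg big_distrl; apply: eq_bigr => i _; rewrite mulmnE mulnA. Qed.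

Lemma wdegU i : wdeg U_(i)%MM = w i.
Proof.
rewrite /wdeg (bigD1 i) //= mnm1E eqxx muln1 big1 ?addn0 // => j /negbTE ji.
by rewrite mnm1E eq_sym ji muln0.
Qed.

End WeightedDegree.

Section Reduction.
Context {n p : nat} {le : rel 'X_{1..n}} (g : 'I_n -> 'X_{1..p}) (w : 'I_n -> nat).
Hypothesis hle : term_order le.
Variable reducible : 'X_{1..n} -> Prop.
Local Notation phi := (mnm_subst g).

Lemma binomial_descent m L T : (L <= m)%MM -> phi L = phi T -> ltT le T L ->
  (wdeg w T < wdeg w L)%N ->
  exists m', [/\ phi m' = phi m, le m' m & (wdeg w m' < wdeg w m)%N].
Proof.
move=> Lm eLT /andP[TL _] wTL; have mE : m = (L + (m - L))%MM by rewrite addmC submK.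
exists (T + (m - L))%MM; move: (m - L)%MM mE => r ->.
by rewrite !mnm_substD eLT (term_order_addr hle) // !wdegD ltn_add2r.
Qed.

Hypothesis reducible_descent : forall m, reducible m ->
  exists m', [/\ phi m' = phi m, le m' m & (wdeg w m' < wdeg w m)%N].

Lemma irreducible_below m : exists m0, [/\ ~ reducible m0, phi m0 = phi m & le m0 m].
Proof.
have [N] := ubnP (wdeg w m); elim: N m => // N IH m wm.
case: (classic (reducible m)) => [|irr_m]; last first.
  by exists m; split; rewrite ?(term_order_refl hle).
move=> /reducible_descent [m' [em' le_m' lt_m']].
have [|m0 [irr_m0 em0 le_m0]] := IH m'; first exact: leq_trans lt_m' wm.
by exists m0; split; rewrite ?em0 //; apply: (term_order_trans hle) le_m'.
Qed.

Hypothesis irreducible_inj : forall m1 m2,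
  ~ reducible m1 -> ~ reducible m2 -> phi m1 = phi m2 -> m1 = m2.

(* If the leading monomial were irreducible, reducing another monomial of the
   same image would lead back to it from below. *)
Lemma kernel_lead_reducible (R : nzRingType) (f : {mpoly R[n]}) :
  f \mPo [tuple 'X_[g i] | i < n] = 0 -> f != 0 ->
  exists mf, is_lead le f mf /\ reducible mf.
Proof.
move=> f0 fn0; have [|mf mf_f mf_max] := term_order_max_seq hle (msupp f).
  by rewrite msupp_eq0.
exists mf; split=> //; apply: NNPP => irr_mf.
have [m [m_f m_mf em]] := comp_mpoly_mnm_fiber g _ _ f0 mf_f.
have [m0 [irr_m0 em0 le_m0]] := irreducible_below m.
have m0E : m0 = mf by apply: irreducible_inj; rewrite ?em0.
rewrite m0E in le_m0.
by move: m_mf; rewrite (term_order_anti hle _ _ (mf_max m m_f) le_m0) eqxx.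
Qed.

End Reduction.

Lemma tofrac_inj {A : idomainType} : injective (@FracField.tofrac A).
Proof. by move=> p q /eqP; rewrite tofrac_eq => /eqP. Qed.

(* Reducing X^j modulo P writes z^j as a combination of 1, z, ..., z^(N-1),
   and f(v)^N clears the denominators of these. *)
Lemma monic_root_pow_scaled {A F : comNzRingType} (f : {rmorphism A -> F})
  (P : {poly A}) (u v : A) (z : F) : P \is monic -> root (map_poly f P) z ->
  f u = z * f v -> forall j, exists h, f h = f v ^+ (size P).-1 * z ^+ j.
Proof.
move=> mP Pz uE j; set N := (size P).-1.
have XjE := Pdiv.RingMonic.rdivp_eq mP 'X^j.
set r := Pdiv.Ring.rmodp _ _ in XjE.
have sr : (size r <= N)%N.
  by rewrite -ltnS /N prednK ?size_poly_gt0 ?monic_neq0 ?Pdiv.Ring.ltn_rmodpN0 ?monic_neq0.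
exists (\sum_(i < size r) r`_i * u ^+ i * v ^+ (N - i)).
have := congr1 (fun p => (map_poly f p).[z]) XjE.
rewrite /= rmorphD rmorphM /= hornerD hornerM (rootP Pz) mulr0 add0r map_polyXn hornerXn => ->.
rewrite (@horner_coef_wide _ (size r)) ?size_poly // mulr_sumr rmorph_sum /=.
apply: eq_bigr => i _; have iN : (i <= N)%N := ltnW (leq_trans (ltn_ord i) sr).
rewrite coef_map !rmorphM !rmorphXn /= uE exprMn -!mulrA -exprD subnKC //.
by rewrite [z ^+ _ * _]mulrC mulrCA.
Qed.

Section PolynomialRingNormal.
Context {k : fieldType} {n : nat}.
Local Notation A := {mpoly k[n]}.
Local Notation tf := (@FracField.tofrac A).

Lemma mleadXn (p : A) (i : nat) : p != 0 -> mlead (p ^+ i) = (mlead p *+ i)%MM.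
Proof. by move=> p0; apply: mleadX_proper; apply: mulfI; rewrite mleadc_eq0. Qed.

(* Compare the leading monomials of v^N u^j = h v^j for j > N * deg(lead v). *)
Lemma mlead_le_of_pow_div (u v : A) (N : nat) : u != 0 -> v != 0 ->
  (forall j, exists h : A, v ^+ N * u ^+ j = h * v ^+ j) -> (mlead v <= mlead u)%MM.
Proof.
move=> u0 v0 vu; have [j jE] : {j | j = (N * mdeg (mlead v)).+1} by eexists.
have [h vuE] := vu j.
have h0 : h != 0.
  have : v ^+ N * u ^+ j != 0 by rewrite mulf_neq0 ?expf_neq0.
  by rewrite vuE; apply: contraNneq => ->; rewrite mul0r.
have := congr1 (@mlead n k) vuE.
rewrite !mleadM ?expf_neq0 // !mleadXn // => /mnmP vuE'.
apply/mnm_lepP => l; have := vuE' l; rewrite !mnmDE !mulmnE.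
have : (mlead v l <= mdeg (mlead v))%N by rewrite mdegE (bigD1 l) //= leq_addr.
case: (leqP (mlead v l) (mlead u l)) => // ul vl.
have : ((mlead u l).+1 * j <= mlead v l * j)%N by rewrite leq_mul2r ul orbT.
rewrite mulSn jE; nia.
Qed.

Lemma integral_fraction_pow_div (P : {poly A}) (u v : A) : P \is monic -> v != 0 ->
  root (map_poly tf P) (tf u / tf v) ->
  forall j, exists h : A, v ^+ (size P).-1 * u ^+ j = h * v ^+ j.
Proof.
move=> mP v0 Pz j; have tv0 : tf v != 0 by rewrite tofrac_eq0.
have [|h hE] := monic_root_pow_scaled tf P u v _ mP Pz _ j; first by rewrite divfK.
exists h; apply: tofrac_inj; rewrite !rmorphM !rmorphXn /= hE.
by rewrite -mulrA -exprMn divfK.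
Qed.

Lemma mlead_cancel (u v : A) : u != 0 -> v != 0 -> (mlead v <= mlead u)%MM ->
  exists w0 : A, u = w0 * v \/ (mlead (u - w0 * v) < mlead u)%O.
Proof.
move=> u0 v0 vu; have [cu cv] : mleadc u != 0 /\ mleadc v != 0 by rewrite !mleadc_eq0.
pose w0 : A := (mleadc u / mleadc v) *: 'X_[mlead u - mlead v]; exists w0.
have c0 : mleadc u / mleadc v != 0 by rewrite mulf_neq0 ?invr_eq0.
have lw0 : mlead w0 = (mlead u - mlead v)%MM.
  by rewrite mleadZ_proper mleadXm // mcoeffX eqxx mulr1.
have cw0 : mleadc w0 = mleadc u / mleadc v by rewrite lw0 mcoeffZ mcoeffX eqxx mulr1.
have w00 : w0 != 0 by rewrite -mleadc_eq0 cw0.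
have lw0v : mlead (w0 * v) = mlead u by rewrite mleadM // lw0 submK.
have cw0v : (w0 * v)@_(mlead u) = mleadc u.
  by rewrite -{1}lw0v mleadM // mleadcM cw0 divfK.
case: (eqVneq (u - w0 * v) 0) => [/eqP|u'0]; first by rewrite subr_eq0 => /eqP; left.
right; rewrite lt_neqAle (le_trans (mleadB_le _ _)) ?lw0v ?joinxx // andbT.
apply: contra u'0 => /eqP u'E.
by rewrite -mleadc_eq0 u'E mcoeffB cw0v subrr.
Qed.

(* Cancel leading terms of u against multiples of v; the shifted polynomial
   P(X + w0) is still monic and kills the new fraction. *)
Lemma integral_fraction_dvd (P : {poly A}) (u v : A) : P \is monic -> v != 0 ->
  root (map_poly tf P) (tf u / tf v) -> exists w : A, u = w * v.
Proof.
move=> mP v0 Pz; have tv0 : tf v != 0 by rewrite tofrac_eq0.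
have [m mE] : {m | mlead u = m} by eexists.
elim/(well_founded_induction (@ltom_wf n)): m u P mP Pz mE => m IH u P mP Pz uE.
subst m; case: (eqVneq u 0) => [->|u0]; first by exists 0; rewrite mul0r.
have vu := mlead_le_of_pow_div _ _ _ u0 v0 (integral_fraction_pow_div _ _ _ mP v0 Pz).
have [w0 [uE|lt_u']] := mlead_cancel u v u0 v0 vu; first by exists w0.
have mP' : P \Po ('X + w0%:P) \is monic.
  by rewrite monicE lead_coef_comp ?size_XaddC // lead_coefXaddC expr1n mulr1 -monicE.
have [|w' w'E] := IH _ lt_u' (u - w0 * v) _ mP' _ erefl.
  rewrite map_comp_poly rmorphD /= map_polyX map_polyC rootE horner_comp.
  rewrite hornerD hornerX hornerC.
  suff -> : tf (u - w0 * v) / tf v + tf w0 = tf u / tf v by [].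
  by rewrite rmorphB rmorphM mulrBl mulfK // subrK.
by exists (w' + w0); rewrite mulrDl -w'E subrK.
Qed.

End PolynomialRingNormal.

Lemma seq_has_argmin {T : eqType} {disp} {O : orderType disp} (f : T -> O) (s : seq T) :
  s != [::] -> exists2 x, x \in s & forall y, y \in s -> (f x <= f y)%O.
Proof.
elim: s => [//|x [|y s] IH] _.
  by exists x => [|z]; rewrite ?inE // => /eqP->.
have [z zs zmin] := IH isT; case: (leP (f x) (f z)) => [xz|/ltW zx].
- exists x => [|u]; rewrite inE ?eqxx // => /orP[/eqP->//|/zmin]; exact: le_trans.
- by exists z => [|u]; rewrite inE ?zs ?orbT // => /orP[/eqP->|/zmin].
Qed.

Lemma mcoeff_sumX {R : nzRingType} {n : nat} (s : seq 'X_{1..n}) (c : 'X_{1..n} -> R) m :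
  uniq s -> (\sum_(m' <- s) c m' *: 'X_[m'] : {mpoly R[n]})@_m = if m \in s then c m else 0.
Proof.
move=> s_uniq; rewrite raddf_sum /=; case: ifP => [ms|/negbT ms].
  rewrite (bigD1_seq m) //= mcoeffZ mcoeffX eqxx mulr1 big1_seq ?addr0 // => m'.
  by case/andP=> m'm _; rewrite mcoeffZ mcoeffX (negbTE m'm) mulr0.
rewrite big1_seq // => m' /andP[_ m's]; rewrite mcoeffZ mcoeffX.
by case: eqVneq m's => [->|]; rewrite ?(negbTE ms) ?mulr0.
Qed.

Section MonomialWeight.
Context {k : fieldType} {n : nat} (l : 'X_{1..n} -> int).
Hypothesis lD : forall m1 m2, l (m1 + m2)%MM = l m1 + l m2.
Local Notation A := {mpoly k[n]}.

Definition weight_ge (al : int) (f : A) : Prop := forall m, m \in msupp f -> al <= l m.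

Definition weight_attained (al : int) (f : A) : Prop := exists2 m, m \in msupp f & l m = al.

Lemma weight_ge_trans al be f : be <= al -> weight_ge al f -> weight_ge be f.
Proof. by move=> ba fal m /fal; apply: le_trans. Qed.

Lemma weight_ge0 al : weight_ge al 0.
Proof. by move=> m; rewrite msupp0. Qed.

Lemma weight_geD al f g : weight_ge al f -> weight_ge al g -> weight_ge al (f + g).
Proof. by move=> fal gal m /msuppD_le; rewrite mem_cat => /orP[/fal|/gal]. Qed.

Lemma weight_geN al f : weight_ge al f -> weight_ge al (- f).
Proof. by move=> fal m; rewrite (perm_mem (msuppN f)); apply: fal. Qed.

Lemma weight_ge_sum al (I : Type) (r : seq I) (F : I -> A) :
  (forall i, weight_ge al (F i)) -> weight_ge al (\sum_(i <- r) F i).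
Proof.
move=> Fal; elim: r => [|x r IH]; first by rewrite big_nil; apply: weight_ge0.
by rewrite big_cons; apply: weight_geD.
Qed.

Lemma weight_geM al be f g :
  weight_ge al f -> weight_ge be g -> weight_ge (al + be) (f * g).
Proof.
move=> fal gbe m /msuppM_le /allpairsP [[m1 m2] /= [m1f m2g ->]].
by rewrite lD lerD ?fal ?gbe.
Qed.

Lemma weight_ge_mpolyX al m : al <= l m -> weight_ge al 'X_[m].
Proof. by move=> alm m'; rewrite msuppX inE => /eqP->. Qed.

Lemma weight_geZ al c f : weight_ge al f -> weight_ge al (c *: f).
Proof. by move=> fal m /msuppZ_le /fal. Qed.

(* The restriction of f to the monomials of weight al is its initial form. *)
Lemma weight_initial_split al f : weight_ge al f -> weight_attained al f ->
  exists f1 f2, [/\ f = f1 + f2, f1 != 0,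
    forall m, m \in msupp f1 -> l m = al & weight_ge (al + 1) f2].
Proof.
move=> fal [m0 m0f lm0].
pose part (Q : pred 'X_{1..n}) : A :=
  \sum_(m <- msupp f) (if Q m then f@_m else 0) *: 'X_[m].
have partE Q m : (part Q)@_m = if Q m then f@_m else 0.
  rewrite mcoeff_sumX ?msupp_uniq //; case: ifP => // /negbT.
  by rewrite -mcoeff_eq0 => /eqP->; case: ifP.
have msupp_part Q m : m \in msupp (part Q) -> Q m && (m \in msupp f).
  by rewrite !mcoeff_msupp partE; case: (Q m); rewrite ?eqxx.
pose Q m := l m == al; exists (part Q), (part (predC Q)); split.
- by apply/mpolyP => m; rewrite mcoeffD !partE /=; case: (Q m); rewrite ?addr0 ?add0r.
- apply/eqP => /(congr1 (mcoeff m0)); rewrite partE /Q lm0 eqxx mcoeff0 => /eqP.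
  by rewrite mcoeff_eq0 m0f.
- by move=> m /msupp_part /andP[/eqP].
- move=> m /msupp_part /andP[Qm /fal alm]; rewrite lezD1 lt_neqAle alm andbT.
  by rewrite eq_sym.
Qed.

(* Initial forms multiply, and A is a domain. *)
Lemma weight_attainedM al be f g :
  weight_ge al f -> weight_attained al f -> weight_ge be g -> weight_attained be g ->
  weight_attained (al + be) (f * g).
Proof.
move=> fal fal' gbe gbe'.
have [f1 [f2 [-> f10 f1al f2al]]] := weight_initial_split _ _ fal fal'.
have [g1 [g2 [gE g10 g1be g2be]]] := weight_initial_split _ _ gbe gbe'.
have f1g10 : f1 * g1 != 0 by rewrite mulf_neq0.
set M := mlead (f1 * g1); have Mf1g1 : M \in msupp (f1 * g1) by apply: mlead_supp.
have lM : l M = al + be.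
  by move: Mf1g1 => /msuppM_le /allpairsP [[m1 m2] /= [/f1al <- /g1be <- ->]].
have rest : weight_ge (al + be + 1) (f1 * g2 + f2 * g).
  apply: weight_geD.
    by rewrite -addrA; apply: weight_geM => // m /f1al ->.
  by rewrite addrAC; apply: weight_geM.
have : M \notin msupp (f1 * g2 + f2 * g) by apply/negP => /rest; rewrite lM lezD1 ltxx.
rewrite -mcoeff_eq0 => /eqP restM; exists M => //.
have -> : (f1 + f2) * g = f1 * g1 + (f1 * g2 + f2 * g).
  by rewrite mulrDl {1}gE mulrDr addrA.
by rewrite mcoeff_msupp mcoeffD restM addr0 -mcoeff_msupp.
Qed.

Lemma weight_mnm0 : l 0%MM = 0.
Proof. by have := lD 0%MM 0%MM; rewrite addm0; lia. Qed.

(* If w had a monomial of negative weight nu, the initial form of w^N would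
   have weight N nu, strictly below the weight of every other term of P.[w]. *)
Lemma integral_weight_ge0 (P : {poly A}) (w : A) : P \is monic -> P.[w] = 0 ->
  (forall i, weight_ge 0 P`_i) -> weight_ge 0 w.
Proof.
move=> mP Pw P0; case: (eqVneq w 0) => [->|w0]; first exact: weight_ge0.
have [M0 M0w M0min] := seq_has_argmin l (msupp w) (ltac:(by rewrite msupp_eq0)).
case: (lerP 0 (l M0)) => [nu0|]; first by move=> m /M0min; apply: le_trans.
set nu := l M0 => nu_lt0.
have wX j : weight_ge (nu *+ j) (w ^+ j) /\ weight_attained (nu *+ j) (w ^+ j).
  elim: j => [|j [IH1 IH2]].
    rewrite expr0 mulr0n; split; last by exists 0%MM; rewrite ?msupp1 ?inE ?weight_mnm0.
    by move=> m; rewrite msupp1 inE => /eqP ->; rewrite weight_mnm0.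
  rewrite exprS mulrS; split; first exact: weight_geM.
  by apply: weight_attainedM => //; exists M0.
set N := (size P).-1.
have sP : size P = N.+1 by rewrite /N prednK // size_poly_gt0 monic_neq0.
have PwE : P.[w] = \sum_(i < N) P`_i * w ^+ i + w ^+ N.
  rewrite horner_coef sP big_ord_recr /=.
  by have := monicP mP; rewrite lead_coefE sP /= => ->; rewrite mul1r.
have wNE : w ^+ N = - \sum_(i < N) P`_i * w ^+ i.
  by apply/eqP; rewrite -addr_eq0 addrC -PwE Pw.
have [M MwN lM] := (wX N).2.
have : weight_ge (nu *+ N + 1) (w ^+ N).
  rewrite wNE; apply/weight_geN/weight_ge_sum => i.
  apply: (weight_ge_trans (0 + nu *+ i)); last by apply: weight_geM => //; exact: (wX i).1.
  have := ltn_ord i; move: (nat_of_ord i) => {}i iN.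
  have : nu *+ (N - i.+1) <= 0 by apply: mulrn_wle0; apply: ltW.
  by rewrite add0r -(subnKC iN) mulrnDr mulrS; lia.
by move=> /(_ M MwN); rewrite lM lezD1 ltxx.
Qed.

End MonomialWeight.

Lemma map_poly_tofrac_lift {A : idomainType} (p : {poly {fraction A}}) :
  (forall i, exists s, p`_i = FracField.tofrac s) ->
  exists q : {poly A}, map_poly (@FracField.tofrac A) q = p.
Proof.
move=> p_int; have p_int' i : exists s, p`_i == FracField.tofrac s.
  by have [s ps] := p_int i; exists s; apply/eqP.
exists (\poly_(i < size p) xchoose (p_int' i)); apply/polyP => i.
rewrite coef_map coef_poly; case: ltnP => [_|pi]; first exact/esym/eqP/(xchooseP (p_int' i)).
by rewrite ?rmorph0 nth_default.
Qed.

Section ConeSubring.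
Context {k : fieldType} {n : nat} {I : Type} (l : I -> 'X_{1..n} -> int).
Hypothesis lD : forall i m1 m2, l i (m1 + m2)%MM = l i m1 + l i m2.
Variable S : {mpoly k[n]} -> Prop.
Hypothesis S_cone : forall s, S s <-> forall i, weight_ge (l i) 0 s.
Local Notation tf := (@FracField.tofrac {mpoly k[n]}).

Theorem normal_subring_cone : normal_subring S.
Proof.
move=> z [u [v [Su Sv v0 ->]]] [p [mp pS pz]].
have [|q qp] := map_poly_tofrac_lift p; first by move=> i; have [s [_ ->]] := pS i; exists s.
have Sq i : S q`_i.
  have [s [Ss ps]] := pS i; suff -> : q`_i = s by [].
  by apply: tofrac_inj; rewrite -coef_map qp.
have mq : q \is monic.
  move: mp; rewrite -qp !monicE lead_coef_map_inj ?rmorph0 //; last exact: tofrac_inj.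
  by rewrite -(rmorph1 tf) => /eqP/tofrac_inj/eqP.
have [|w uE] := integral_fraction_dvd q u v mq v0; first by rewrite qp.
have tv0 : tf v != 0 by rewrite tofrac_eq0.
have zw : tf u / tf v = tf w by rewrite uE rmorphM mulfK.
exists w; split=> //.
apply/S_cone => i; apply: (integral_weight_ge0 (l i) (lD i) q w mq) => [|j].
  apply: tofrac_inj; rewrite rmorph0 -horner_map qp.
  by move: pz; rewrite zw => /rootP.
exact: (S_cone _).1 (Sq j) i.
Qed.

End ConeSubring.

Definition mnm3 (x y t : nat) : 'X_{1..3} :=
  (mmon 2 0 *+ x + mmon 2 1 *+ y + mmon 2 2 *+ t)%MM.

Lemma mnm3E x y t :
  [/\ mnm3 x y t (inord 0) = x, mnm3 x y t (inord 1) = y & mnm3 x y t (inord 2) = t].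
Proof.
have mmonE j l : (j < 3)%N -> (l < 3)%N -> mmon 2 j (inord l) = (j == l).
  move=> j3 l3; rewrite /mmon mnm1E; congr nat_of_bool.
  by apply/eqP/eqP => [/(congr1 val)|->]; rewrite //= !inordK.
by split; rewrite !mnmDE !mulmnE !mmonE //=; lia.
Qed.

Lemma mnm3_eta (M : 'X_{1..3}) : M = mnm3 (M (inord 0)) (M (inord 1)) (M (inord 2)).
Proof.
case: (mnm3E (M (inord 0)) (M (inord 1)) (M (inord 2))) => e0 e1 e2.
apply/mnmP => i; rewrite -(inord_val i).
by case: i => [[|[|[|//]]] ?] /=; rewrite ?e0 ?e1 ?e2.
Qed.

Lemma mnm3D x y t x' y' t' :
  (mnm3 x y t + mnm3 x' y' t')%MM = mnm3 (x + x') (y + y') (t + t').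
Proof.
apply: etrans (mnm3_eta _) _; rewrite !(mnmDE _ (mnm3 x y t)).
by case: (mnm3E x y t) (mnm3E x' y' t') => [-> -> ->] [-> -> ->].
Qed.

Lemma mnm3Mn x y t b : (mnm3 x y t *+ b)%MM = mnm3 (x * b) (y * b) (t * b).
Proof.
by apply: etrans (mnm3_eta _) _; rewrite !(mulmnE (mnm3 x y t)); case: (mnm3E x y t) => [-> -> ->].
Qed.

(* [psi_img] writes [a (i - 2)] with the subtraction of the ring ['I_d.+3]. *)
Lemma ord_sub2 d (i : 'I_d.+3) : (2 <= i)%N -> nat_of_ord (i - 2%:R) = (i - 2)%N.
Proof.
move=> i2 /=; rewrite !(@modn_small 1) // (@modn_small 2) // (@modn_small (d.+3 - 2)) //.
have -> : (i + (d.+3 - 2) = (i - 2) + d.+3)%N by lia.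
by rewrite modnDr modn_small //; have := ltn_ord i; lia.
Qed.

Section Exponents.
Context {k : fieldType} (d : nat) (a : nat -> nat).

Definition psi_xexp (i : nat) : nat :=
  (if i == 0 then 1 else if i == 1 then 0 else d - (i - 2))%N.
Definition psi_yexp (i : nat) : nat :=
  (if i == 0 then 0 else if i == 1 then 1 else a (i - 2))%N.
Definition psi_texp (i : nat) : nat := (1 < i)%N.

Definition psi_exp (i : 'I_d.+3) : 'X_{1..3} := mnm3 (psi_xexp i) (psi_yexp i) (psi_texp i).

Local Notation psi_mnm := (mnm_subst psi_exp).

Lemma psi_imgE (i : 'I_d.+3) : psi_img (k := k) d a i = 'X_[psi_exp i].
Proof.
rewrite /psi_exp /mnm3 !mpolyXD -!mpolyXn /psi_img /psi_xexp /psi_yexp /psi_texp.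
rewrite /tx /ty /tt /mvar /mmon.
case: eqP => [->|i0]; first by rewrite /= !expr0 !mulr1 expr1.
case: eqP => [->|i1]; first by rewrite /= !expr0 mulr1 mul1r expr1.
have i2 : (2 <= i)%N by move: i0 i1; case: (nat_of_ord i) => [|[|]].
by rewrite ord_sub2 // i2 expr1.
Qed.

Lemma psiE (f : {mpoly k[d.+3]}) :
  psi d a f = f \mPo [tuple 'X_[psi_exp i] | i < d.+3].
Proof. by rewrite /psi; congr comp_mpoly; apply: eq_mktuple => i; rewrite psi_imgE. Qed.

Lemma psiX m : psi (k := k) d a 'X_[m] = 'X_[psi_mnm m].
Proof. by rewrite psiE comp_mpoly_mnmX. Qed.

End Exponents.

Lemma sum_ord3_split d (F : 'I_d.+3 -> nat) :
  (\sum_(i < d.+3) F i = F (inord 0) + F (inord 1) + \sum_(j < d.+1) F (inord j.+2))%N.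
Proof.
rewrite [LHS]big_ord_recl [in LHS]big_ord_recl addnA.
congr (F _ + F _ + _)%N; try by apply/val_inj; rewrite /= inordK.
apply: eq_bigr => j _; congr F; apply/val_inj.
by rewrite /= inordK /bump /= ?add1n //; exact: ltn_ord j.
Qed.

Section ExponentMap.
Context (d : nat) (a : nat -> nat).
Local Notation psi_exp := (psi_exp d a).
Local Notation psi_mnm := (mnm_subst psi_exp).

Definition Tdeg (m : 'X_{1..d.+3}) (j : nat) : nat := m (inord j.+2).

Lemma psi_exp_x : psi_exp (inord 0) = mnm3 1 0 0.
Proof. by rewrite /psi_exp inordK. Qed.

Lemma psi_exp_y : psi_exp (inord 1) = mnm3 0 1 0.
Proof. by rewrite /psi_exp inordK. Qed.

Lemma psi_exp_T j : (j <= d)%N -> psi_exp (inord j.+2) = mnm3 (d - j) (a j) 1.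
Proof. by move=> jd; rewrite /psi_exp inordK ?ltnS // /psi_xexp /psi_yexp /= subn2. Qed.

Lemma inord_T (j : 'I_d.+1) : nat_of_ord (inord j.+2 : 'I_d.+3) = j.+2.
Proof. by apply: inordK; apply: ltn_ord j. Qed.

Lemma psi_mnm_coord m :
  [/\ psi_mnm m (inord 0) = (\sum_(i < d.+3) psi_xexp d i * m i)%N,
      psi_mnm m (inord 1) = (\sum_(i < d.+3) psi_yexp a i * m i)%N
    & psi_mnm m (inord 2) = (\sum_(i < d.+3) psi_texp i * m i)%N].
Proof.
split; rewrite mnm_sumE; apply: eq_bigr => i _; rewrite mulmnE;
  by case: (mnm3E (psi_xexp d i) (psi_yexp a i) (psi_texp i)) => e0 e1 e2;
     rewrite ?e0 ?e1 ?e2.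
Qed.

Lemma psi_mnm_x m :
  psi_mnm m (inord 0) = (m (inord 0) + \sum_(j < d.+1) (d - j) * Tdeg m j)%N.
Proof.
case: (psi_mnm_coord m) => -> _ _; rewrite sum_ord3_split !inordK //.
rewrite mul1n mul0n addn0; congr (_ + _)%N; apply: eq_bigr => j _.
by rewrite inord_T /psi_xexp /= subn2.
Qed.

Lemma psi_mnm_y m :
  psi_mnm m (inord 1) = (m (inord 1) + \sum_(j < d.+1) a j * Tdeg m j)%N.
Proof.
case: (psi_mnm_coord m) => _ -> _; rewrite sum_ord3_split !inordK //.
rewrite mul0n mul1n add0n; congr (_ + _)%N; apply: eq_bigr => j _.
by rewrite inord_T /psi_yexp /= subn2.
Qed.

Lemma psi_mnm_t m : psi_mnm m (inord 2) = (\sum_(j < d.+1) Tdeg m j)%N.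
Proof.
case: (psi_mnm_coord m) => _ _ ->; rewrite sum_ord3_split !inordK //.
rewrite !mul0n add0n; apply: eq_bigr => j _.
by rewrite inord_T /psi_texp /= mul1n.
Qed.

End ExponentMap.

Section ConvexExponents.
Local Open Scope nat_scope.
Context (d : nat) (a : nat -> nat).
Hypothesis ha : forall i, i < d -> a i < a i.+1.
Hypothesis hb : forall i, 1 <= i -> i < d -> bdiff a i <= bdiff a i.+1.

Lemma a_succ i : 1 <= i <= d -> a i = a i.-1 + bdiff a i.
Proof. by case: i => [//|i] /andP[_ id]; rewrite /bdiff /=; have := ha i id; lia. Qed.

Lemma bdiff_mono j i : 1 <= j -> j <= i -> i <= d ->
  bdiff a j <= bdiff a i.
Proof.
move=> j1; elim: i => [|i IH] ji id; first by lia.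
case: (ltngtP j i.+1) ji => // [ji|<-] _ //.
by apply: leq_trans (IH _ _) (hb _ _ _); lia.
Qed.

Lemma a_tangent_left i t : 1 <= i <= d -> t <= i ->
  a i <= a (i - t) + t * bdiff a i.
Proof.
move=> id; elim: t => [|t IH] ti; first by rewrite subn0; lia.
have := IH (ltnW ti); have := a_succ (i - t) ltac:(lia).
have := bdiff_mono (i - t) i ltac:(lia) ltac:(lia) ltac:(lia).
have -> : i - t.+1 = (i - t).-1 by lia.
lia.
Qed.

Lemma a_tangent_right i t : 1 <= i <= d -> i + t <= d ->
  a i + t * bdiff a i <= a (i + t).
Proof.
move=> id; elim: t => [|t IH] itd; first by rewrite addn0; lia.
have := IH ltac:(lia); have := a_succ (i + t.+1) ltac:(lia).
have := bdiff_mono i (i + t.+1) ltac:(lia) ltac:(lia) ltac:(lia).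
rewrite addnS /=; lia.
Qed.

(* Convexity: the points (d - j, a j) lie above the line of slope -b_i
   through (d - i, a i). *)
Lemma a_tangent i j : 1 <= i <= d -> j <= d ->
  bdiff a i * (d - i) + a i <= bdiff a i * (d - j) + a j.
Proof.
move=> id jd; case: (leqP j i) => [ji|ij].
- have := a_tangent_left i (i - j) id ltac:(lia).
  have -> : i - (i - j) = j by lia.
  have -> : d - j = (d - i) + (i - j) by lia.
  rewrite mulnDr; lia.
- have := a_tangent_right i (j - i) id ltac:(lia).
  have -> : i + (j - i) = j by lia.
  have -> : d - i = (d - j) + (j - i) by lia.
  rewrite mulnDr; lia.
Qed.

Local Notation psi_mnm := (mnm_subst (psi_exp d a)).

Lemma psi_mnm_lin i : 1 <= i <= d ->
  psi_mnm (mx d + mT d i) = psi_mnm (my d *+ bdiff a i + mT d i.-1).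
Proof.
move=> id; rewrite !mnm_substD mnm_substMn !mnm_substU psi_exp_x psi_exp_y.
rewrite !psi_exp_T ?(leq_trans (leq_pred i)); try by case/andP: id.
by rewrite mnm3Mn !mnm3D; have := a_succ i id => ai; congr mnm3; lia.
Qed.

Lemma psi_mnm_quad i j : 1 <= j -> j < i -> i <= d ->
  psi_mnm (mT d i + mT d j.-1) =
  psi_mnm (my d *+ (bdiff a i - bdiff a j) + mT d i.-1 + mT d j).
Proof.
move=> j1 ji id; rewrite !mnm_substD mnm_substMn !mnm_substU psi_exp_y.
rewrite !psi_exp_T; try lia.
have := a_succ i ltac:(lia); have := a_succ j ltac:(lia).
have := bdiff_mono j i j1 (ltnW ji) id.
by rewrite mnm3Mn !mnm3D => bji aj ai; congr mnm3; lia.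
Qed.

End ConvexExponents.

Lemma sum_ord_pick n (j0 : nat) (g : nat -> nat) :
  (\sum_(j < n) ((j : nat) == j0) * g j = if j0 < n then g j0 else 0)%N.
Proof.
elim: n => [|n IH]; first by rewrite big_ord0.
rewrite big_ord_recr /= IH; case: (eqVneq j0 n) => [->|j0n] /=.
  by rewrite ltnn ltnSn mul1n add0n.
by rewrite mul0n addn0 [in RHS]ltnS [in RHS]leq_eqVlt (negbTE j0n).
Qed.

Section SpreadFree.
Local Open Scope nat_scope.
Variable d : nat.

Definition spread_free (e : nat -> nat) : Prop :=
  forall p q, q.+2 <= p -> p <= d -> e p = 0 \/ e q = 0.

Variable e : nat -> nat.
Hypothesis e_spread : spread_free e.
Let D := \sum_(j < d.+1) e j.
Let W := \sum_(j < d.+1) (d - j) * e j.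

Lemma spread_free_shape : 0 < D -> exists c r, [/\ c <= d, r < D,
  W + r = (d - c) * D & forall j, j <= d -> e j = (j == c) * (D - r) + (j == c.+1) * r].
Proof.
move=> D0; have supp_e : exists j, (j <= d) && (0 < e j).
  case: (boolP [exists j : 'I_d.+1, 0 < e j]) => [/existsP [j ej]|].
    by exists j; rewrite ej -ltnS ltn_ord.
  rewrite negb_exists => /forallP e0; move: D0; rewrite /D big1 // => j _.
  by have := e0 j; case: (e j).
case: (ex_minnP supp_e) => c /andP[cd ec] cmin.
pose r := if c < d then e c.+1 else 0.
have eE j : j <= d -> e j = (j == c) * e c + (j == c.+1) * r.
  move=> jd'; case: (ltngtP j c) => [jc|cj|->]; last by lia.
  - by case: (posnP (e j)) => [->|/(conj jd')/andP/cmin]; lia.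
  - case: (eqVneq j c.+1) => [->|jc1]; first by rewrite /r ifT; lia.
    by case: (e_spread j c ltac:(lia) jd'); lia.
have DE : D = e c + r.
  rewrite /D (eq_bigr (fun j : 'I_d.+1 => (j == c :> nat) * e c + (j == c.+1 :> nat) * r));
    last by move=> i _; apply: eE; rewrite -ltnS ltn_ord.
  by rewrite big_split /= !(sum_ord_pick d.+1 _ (fun _ => _)) !ltnS cd /r; case: ltnP.
have WE : W = (d - c) * e c + (d - c.+1) * r.
  rewrite /W (eq_bigr (fun j : 'I_d.+1 =>
    (j == c :> nat) * ((d - j) * e c) + (j == c.+1 :> nat) * ((d - j) * r))); last first.
    move=> i _; rewrite eE; last by rewrite -ltnS ltn_ord.
    by case: eqP => _; case: eqP => _; lia.
  rewrite big_split /= (sum_ord_pick d.+1 c (fun j => (d - j) * e c)).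
  by rewrite (sum_ord_pick d.+1 c.+1 (fun j => (d - j) * r)) !ltnS cd /r; case: ltnP; lia.
exists c, r; split=> //; first by lia.
- rewrite WE DE mulnDr; case: (posnP r) => [->|r0]; first by lia.
  have cd' : c < d by move: r0; rewrite /r; case: (ltnP c d).
  have -> : d - c = (d - c.+1).+1 by lia.
  lia.
- by move=> j jd'; rewrite eE // DE addnK.
Qed.

End SpreadFree.

Section SpreadFreeUnique.
Local Open Scope nat_scope.
Variable d : nat.

Lemma weighted_sum_le (e : nat -> nat) :
  \sum_(j < d.+1) (d - j) * e j <= d * \sum_(j < d.+1) e j.
Proof. by rewrite big_distrr /=; apply: leq_sum => j _; rewrite leq_mul2r leq_subr orbT. Qed.

Lemma ceil_quotient_unique s s' D r r' W : r < D -> r' < D ->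
  W + r = s * D -> W + r' = s' * D -> s = s'.
Proof.
move=> rD r'D sD s'D; case: (ltngtP s s') => // [ss'|s's].
- have : s.+1 * D <= s' * D by rewrite leq_mul2r ss' orbT.
  by rewrite mulSn; lia.
- have : s'.+1 * D <= s * D by rewrite leq_mul2r s's orbT.
  by rewrite mulSn; lia.
Qed.

Lemma spread_free_unique (e e' : nat -> nat) : spread_free d e -> spread_free d e' ->
  \sum_(j < d.+1) e j = \sum_(j < d.+1) e' j ->
  \sum_(j < d.+1) (d - j) * e j = \sum_(j < d.+1) (d - j) * e' j ->
  forall j, j <= d -> e j = e' j.
Proof.
move=> e_sf e'_sf eD eW; case: (posnP (\sum_(j < d.+1) e j)) => [D0 j jd|D0].
  have le_sum f : f j <= \sum_(i < d.+1) f i.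
    by rewrite (bigD1 (Ordinal (jd : j < d.+1))) //= leq_addr.
  by have := le_sum e; have := le_sum e'; lia.
have [c [r [cd rD eW1 eE]]] := spread_free_shape _ _ e_sf D0.
have [c' [r' [c'd r'D eW2 e'E]]] := spread_free_shape _ _ e'_sf (leq_trans D0 (eq_leq eD)).
rewrite -eD -eW in r'D eW2 e'E.
have /(congr1 (subn d)) : d - c = d - c' by apply: ceil_quotient_unique eW1 eW2.
rewrite !subKn // => cc'; have rr' : r = r' by rewrite cc' in eW1; lia.
by move=> j jd; rewrite eE // e'E // cc' rr'.
Qed.

(* A positive exponent of x forces the T-part onto T_0, where the weight is
   maximal: hence the x-exponent is recovered as a truncated difference. *)
Lemma x_exponent_recovered (x : nat) (e : nat -> nat) :
  (0 < x -> forall j, 1 <= j <= d -> e j = 0) ->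
  x = x + \sum_(j < d.+1) (d - j) * e j - d * \sum_(j < d.+1) e j.
Proof.
move=> xT0; have := weighted_sum_le e; case: (posnP x) => [-> le_WD|x0 _].
  by apply/esym/eqP; rewrite add0n subn_eq0.
rewrite [X in _ + X](_ : _ = d * \sum_(j < d.+1) e j) ?addnK //.
rewrite big_distrr /=; apply: eq_bigr => j _.
case: (posnP j) => [->|j0]; first by rewrite subn0.
by rewrite xT0 ?muln0 // j0 -ltnS ltn_ord.
Qed.

End SpreadFreeUnique.

Lemma lem_U2 n (i j : 'I_n) (m : 'X_{1..n}) : i != j -> (0 < m i)%N -> (0 < m j)%N ->
  (U_(i) + U_(j) <= m)%MM.
Proof.
move=> ij mi mj; apply/mnm_lepP => l; rewrite mnmDE !mnm1E.
case: (eqVneq i l) => [<-|il]; first by rewrite eq_sym (negbTE ij) /=; lia.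
by case: (eqVneq j l) => [<-|jl] /=; lia.
Qed.

Lemma inord_neq d (p q : nat) : (p <= d.+2)%N -> (q <= d.+2)%N -> p != q ->
  (inord p : 'I_d.+3) != inord q.
Proof. by move=> pd qd; apply: contra => /eqP/(congr1 val); rewrite /= !inordK // => ->. Qed.

Section Reducible.
Context (d : nat) (a : nat -> nat).
Local Notation psi_mnm := (mnm_subst (psi_exp d a)).
Local Notation Tdeg := (Tdeg d).

Definition reducible (m : 'X_{1..d.+3}) : Prop :=
  (exists i, [/\ (1 <= i)%N, (i <= d)%N & (mx d + mT d i <= m)%MM]) \/
  (exists i j, [/\ (1 <= j)%N, (j < i)%N, (i <= d)%N & (mT d i + mT d j.-1 <= m)%MM]).

Lemma irreducible_spread_free m : ~ reducible m -> spread_free d (Tdeg m).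
Proof.
move=> irr p q qp pd; case: (posnP (Tdeg m p)) => [|mp]; first by left.
case: (posnP (Tdeg m q)) => [|mq]; first by right.
by case: irr; right; exists p, q.+1; split; try lia; apply: lem_U2 => //; apply: inord_neq; lia.
Qed.

Lemma irreducible_x_T0 m : ~ reducible m -> (0 < m (inord 0))%N ->
  forall j, (1 <= j <= d)%N -> Tdeg m j = 0%N.
Proof.
move=> irr mx0 j /andP[j1 jd]; case: (posnP (Tdeg m j)) => // mj.
by case: irr; left; exists j; split=> //; apply: lem_U2 => //; apply: inord_neq; lia.
Qed.

Lemma psi_mnm_irreducible_inj m1 m2 : ~ reducible m1 -> ~ reducible m2 ->
  psi_mnm m1 = psi_mnm m2 -> m1 = m2.
Proof.
move=> irr1 irr2 e12.
have := congr1 (fun M : 'X_{1..3} => M (inord 0)) e12; rewrite /= !psi_mnm_x => eX.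
have := congr1 (fun M : 'X_{1..3} => M (inord 1)) e12; rewrite /= !psi_mnm_y => eY.
have := congr1 (fun M : 'X_{1..3} => M (inord 2)) e12; rewrite /= !psi_mnm_t => eD.
have ex : m1 (inord 0) = m2 (inord 0).
  rewrite (x_exponent_recovered d _ _ (irreducible_x_T0 m1 irr1)).
  by rewrite (x_exponent_recovered d _ _ (irreducible_x_T0 m2 irr2)) eX eD.
have eT := spread_free_unique d _ _ (irreducible_spread_free m1 irr1)
  (irreducible_spread_free m2 irr2) eD ltac:(lia).
have ey : m1 (inord 1) = m2 (inord 1).
  suff : (\sum_(j < d.+1) a j * Tdeg m1 j = \sum_(j < d.+1) a j * Tdeg m2 j)%N by lia.
  by apply: eq_bigr => j _; rewrite eT // -ltnS ltn_ord.
apply/mnmP => i; rewrite -(inord_val i).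
case: i => [[|[|j]] i_lt]; [exact: ex | exact: ey | exact: eT].
Qed.

(* Both kinds of generators strictly decrease this weight from their initial
   term. *)
Definition descent_weight (i : 'I_d.+3) : nat :=
  (if i == 0 :> nat then 1 else if i == 1 :> nat then 0 else (i - 2) ^ 2)%N.

Lemma descent_weightT j : (j <= d)%N -> descent_weight (inord j.+2) = (j ^ 2)%N.
Proof. by move=> jd; rewrite /descent_weight inordK ?ltnS //= subn2. Qed.

Section Descent.
Context (le : rel 'X_{1..d.+3}) (hle : term_order le).
Hypothesis ha : forall i, (i < d)%N -> (a i < a i.+1)%N.
Hypothesis hb : forall i, (1 <= i)%N -> (i < d)%N -> (bdiff a i <= bdiff a i.+1)%N.
Hypothesis hin1 : forall i, (1 <= i)%N -> (i <= d)%N ->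
  ltT le (my d *+ bdiff a i + mT d i.-1)%MM (mx d + mT d i)%MM.
Hypothesis hin2 : forall i j, (1 <= j)%N -> (j < i)%N -> (i <= d)%N ->
  ltT le (my d *+ (bdiff a i - bdiff a j) + mT d i.-1 + mT d j)%MM
         (mT d i + mT d j.-1)%MM.

Lemma reducible_descent m : reducible m -> exists m',
  [/\ psi_mnm m' = psi_mnm m, le m' m & (wdeg descent_weight m' < wdeg descent_weight m)%N].
Proof.
case=> [[i [i1 id L]]|[i [j [j1 ji id L]]]].
- have iE : (1 <= i <= d)%N by rewrite i1.
  apply: (binomial_descent _ _ hle _ _ _ L (psi_mnm_lin d a ha i iE) (hin1 i i1 id)).
  rewrite !wdegD wdegMn !wdegU !descent_weightT ?(leq_trans (leq_pred i)) //.
  rewrite /descent_weight inordK //=.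
  by case: i i1 {L id iE} => [|i] //=; rewrite !expnS expn0; lia.
- apply: (binomial_descent _ _ hle _ _ _ L (psi_mnm_quad d a ha hb i j j1 ji id)
    (hin2 i j j1 ji id)).
  rewrite !wdegD wdegMn !wdegU !descent_weightT; try lia.
  rewrite /descent_weight inordK //= mul0n add0n.
  by case: i ji {L id} => [|i] //= ji; case: j j1 ji => [|j] //= _ ji; rewrite !expnS !expn0; nia.
Qed.

End Descent.
End Reducible.

Section GroebnerBasis.
Context {k : fieldType} (d : nat) (a : nat -> nat).
Local Notation psi_mnm := (mnm_subst (psi_exp d a)).

Lemma lin_binomialE i b : vx (k := k) d * vT d i - vy d ^+ b * vT d i.-1 =
  'X_[mx d + mT d i] - 'X_[my d *+ b + mT d i.-1].
Proof. by rewrite !mpolyXD mpolyXn. Qed.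

Lemma quad_binomialE i j b :
  vT (k := k) d i * vT d j.-1 - vy d ^+ b * vT d i.-1 * vT d j =
  'X_[mT d i + mT d j.-1] - 'X_[my d *+ b + mT d i.-1 + mT d j].
Proof. by rewrite !mpolyXD mpolyXn. Qed.

Lemma psi_binomial L T : psi_mnm L = psi_mnm T -> psi (k := k) d a ('X_[L] - 'X_[T]) = 0.
Proof. by move=> eLT; rewrite /psi comp_mpolyB -!/(psi d a _) !psiX eLT subrr. Qed.

Context (le : rel 'X_{1..d.+3}) (hle : term_order le).
Hypothesis ha : forall i, (i < d)%N -> (a i < a i.+1)%N.
Hypothesis hb : forall i, (1 <= i)%N -> (i < d)%N -> (bdiff a i <= bdiff a i.+1)%N.
Hypothesis hin1 : forall i, (1 <= i)%N -> (i <= d)%N ->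
  ltT le (my d *+ bdiff a i + mT d i.-1)%MM (mx d + mT d i)%MM.
Hypothesis hin2 : forall i j, (1 <= j)%N -> (j < i)%N -> (i <= d)%N ->
  ltT le (my d *+ (bdiff a i - bdiff a j) + mT d i.-1 + mT d j)%MM
         (mT d i + mT d j.-1)%MM.

Theorem groebner_basis_kerpsi : groebner_basis le (kerpsi (k := k) d a) (gensH d a).
Proof.
split=> [g [[i [i1 id ->]]|[i [j [j1 ji id ->]]]]|f f0 fn0].
- by rewrite /kerpsi lin_binomialE psi_binomial // psi_mnm_lin // i1.
- by rewrite /kerpsi quad_binomialE psi_binomial // psi_mnm_quad.
have [mf [lead_mf red_mf]] := kernel_lead_reducible _ _ hle (reducible d)
  (reducible_descent d a le hle ha hb hin1 hin2) (psi_mnm_irreducible_inj d a)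
  _ f (etrans (esym (psiE d a f)) f0) fn0.
case: red_mf => [[i [i1 id L]]|[i [j [j1 ji id L]]]].
- exists (vx d * vT d i - vy d ^+ bdiff a i * vT d i.-1); split; first by left; exists i.
  exists mf, (mx d + mT d i)%MM; split=> //.
  by rewrite lin_binomialE; apply: (is_lead_binomial hle); apply: hin1.
- exists (vT d i * vT d j.-1 - vy d ^+ (bdiff a i - bdiff a j) * vT d i.-1 * vT d j).
  split; first by right; exists i, j.
  exists mf, (mT d i + mT d j.-1)%MM; split=> //.
  by rewrite quad_binomialE; apply: (is_lead_binomial hle); apply: hin2.
Qed.

End GroebnerBasis.

Section ReesCone.
Local Open Scope nat_scope.
Context (d : nat) (a : nat -> nat).
Hypothesis ha0 : a 0 = 0.
Hypothesis ha : forall i, i < d -> a i < a i.+1.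
Hypothesis hb : forall i, 1 <= i -> i < d -> bdiff a i <= bdiff a i.+1.
Local Notation psi_mnm := (mnm_subst (psi_exp d a)).

(* The exponent (X, Y, D) of x^X y^Y t^D lies in the image of psi_mnm exactly
   when b_i X + Y >= (b_i (d - i) + a_i) D for 1 <= i <= d. *)
Definition facet_const (i : nat) : nat := bdiff a i * (d - i) + a i.

Lemma psi_mnm_facet m i : 1 <= i <= d ->
  facet_const i * psi_mnm m (inord 2) <=
  bdiff a i * psi_mnm m (inord 0) + psi_mnm m (inord 1).
Proof.
move=> id; rewrite psi_mnm_x psi_mnm_y psi_mnm_t mulnDr !big_distrr /=.
suff : \sum_(j < d.+1) facet_const i * Tdeg d m j <=
       \sum_(j < d.+1) (bdiff a i * ((d - j) * Tdeg d m j) + a j * Tdeg d m j).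
  by rewrite big_split /=; lia.
apply: leq_sum => j _; rewrite mulnA -mulnDl leq_mul2r.
by rewrite (a_tangent d a ha hb) ?orbT // -ltnS.
Qed.

Lemma psi_mnm_of_facets (M : 'X_{1..3}) :
  (forall i, 1 <= i <= d ->
     facet_const i * M (inord 2) <= bdiff a i * M (inord 0) + M (inord 1)) ->
  exists m, psi_mnm m = M.
Proof.
move=> MF; rewrite (mnm3_eta M).
move: (M (inord 0)) (M (inord 1)) (M (inord 2)) MF => X Y D MF.
case: (leqP (d * D) X) => [dDX|XdD].
  exists (mx d *+ (X - d * D) + my d *+ Y + mT d 0 *+ D)%MM.
  rewrite !mnm_substD !mnm_substMn !mnm_substU psi_exp_x psi_exp_y psi_exp_T // ha0.
  by rewrite !mnm3Mn !mnm3D; congr mnm3; lia.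
have D0 : 0 < D by case: (posnP D) XdD => // ->; rewrite muln0.
(* Write X = q D + p with 0 <= p < D; the preimage is y^* T_c^p T_(c+1)^(D-p)
   with c + 1 = d - q. *)
move: (divn_eq X D) (ltn_mod X D); rewrite D0.
have : X %/ D < d by rewrite ltn_divLR.
move: (X %/ D) (X %% D) => q p qd XE pD.
have [c cE] : {c | d - q = c.+1} by exists (d - q.+1); lia.
have := MF c.+1 ltac:(lia); have := a_succ d a ha c.+1 ltac:(lia).
rewrite /facet_const (_ : d - c.+1 = q); last by lia.
move: (bdiff a c.+1) => b /= acE facet.
have [r DE] : {r | D = p + r} by exists (D - p); lia.
rewrite {}DE {D D0 XdD MF pD} in facet XE *.
have Yge : a c * p + a c.+1 * r <= Y.
  by rewrite XE acE in facet *; nia.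
exists (my d *+ (Y - (a c * p + a c.+1 * r)) + mT d c *+ p + mT d c.+1 *+ r)%MM.
rewrite !mnm_substD !mnm_substMn !mnm_substU psi_exp_y !psi_exp_T; try lia.
by rewrite !mnm3Mn !mnm3D; congr mnm3; rewrite ?cE; nia.
Qed.

Definition facet (i : 'I_d) (M : 'X_{1..3}) : int :=
  (bdiff a i.+1 * M (inord 0) + M (inord 1))%:Z - (facet_const i.+1 * M (inord 2))%:Z.

Lemma facetD i M1 M2 : facet i (M1 + M2)%MM = (facet i M1 + facet i M2)%R.
Proof. by rewrite /facet !mnmDE; lia. Qed.

Section Monomials.
Local Open Scope ring_scope.
Context {k : fieldType}.

Lemma rees_monomials (r : seq 'X_{1..3}) (c : 'X_{1..3} -> k) :
  (forall M, M \in r -> exists m, psi_mnm m = M) ->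
  rees d a (\sum_(M <- r) c M *: 'X_[M]).
Proof.
elim: r => [_|M r IH rM]; first by exists 0; rewrite big_nil /psi comp_mpoly0.
have [q qE] : rees d a (\sum_(M' <- r) c M' *: 'X_[M']).
  by apply: IH => M' M'r; apply: rM; rewrite inE M'r orbT.
have [m mM] := rM M (mem_head M r).
exists (c M *: 'X_[m] + q).
by rewrite big_cons qE !psiE comp_mpolyD comp_mpolyZ comp_mpoly_mnmX mM.
Qed.

Lemma rees_cone s : rees (k := k) d a s <-> forall i, weight_ge (facet i) 0 s.
Proof.
split=> [[q ->] i|sF].
  rewrite psiE comp_mpoly_mnmE; apply: weight_ge_sum => m.
  apply/weight_geZ/weight_ge_mpolyX; rewrite /facet subr_ge0 lez_nat.
  by apply: psi_mnm_facet; rewrite ltn_ord andbT.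
rewrite (mpolyE s); apply: rees_monomials => M Ms; apply: psi_mnm_of_facets => i /andP[i1 id].
have i'd : (i.-1 < d)%N by rewrite prednK.
have := sF (Ordinal i'd) M Ms.
by rewrite /facet subr_ge0 lez_nat /= prednK.
Qed.

End Monomials.

End ReesCone.

Theorem normal_rees {k : fieldType} (d : nat) (a : nat -> nat) :
  a 0%N = 0%N -> (forall i, (i < d)%N -> (a i < a i.+1)%N) ->
  (forall i, (1 <= i)%N -> (i < d)%N -> (bdiff a i <= bdiff a i.+1)%N) ->
  normal_subring (rees (k := k) d a).
Proof.
move=> ha0 ha hb; apply: (normal_subring_cone (facet d a)) => [i M1 M2|s].
  exact: facetD.
exact: rees_cone.
Qed.

Theorem proposition6p2 (k : closedFieldType) (Hchar : [pchar k] =i pred0)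
  (d : nat) (a : nat -> nat)
  (ha0 : a 0%N = 0%N)
  (ha : forall i, (i < d)%N -> (a i < a i.+1)%N)
  (hb : forall i, (1 <= i)%N -> (i < d)%N -> (bdiff a i <= bdiff a i.+1)%N)
  (le : rel 'X_{1..d.+3}) (hle : term_order le)
  (hin1 : forall i, (1 <= i)%N -> (i <= d)%N ->
     ltT le (my d *+ bdiff a i + mT d i.-1)%MM (mx d + mT d i)%MM)
  (hin2 : forall i j, (1 <= j)%N -> (j < i)%N -> (i <= d)%N ->
     ltT le (my d *+ (bdiff a i - bdiff a j) + mT d i.-1 + mT d j)%MM
            (mT d i + mT d j.-1)%MM) :
  groebner_basis le (kerpsi (k := k) d a) (gensH (k := k) d a)
  /\ normal_subring (rees (k := k) d a).
Proof.
split; first exact: (groebner_basis_kerpsi d a le hle ha hb hin1 hin2).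
exact: normal_rees.
Qed.
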